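(* Let $A$ and $B$ be persistence diagrams and let $c^*\ge 0$ be an optimal dilation for $(A,B)$. Then: (1) (Positivity) $\overline{d_D}(A,B)\ge 0$, and $\overline{d_D}(A,B)=0$ if and only if $B=c^*A$. (2) (Asymmetry) $\overline{d_D}(A,B)\ge c^*\cdot \overline{d_D}(B,A)$. (3) (Dilation invariance) For every $c>0$: $\overline{d_D}(cA,B)=\overline{d_D}(A,B)$ and $\overline{d_D}(A,cB)=c\cdot\overline{d_D}(A,B)$. (4) (Boundedness) $\overline{d_D}(A,B)\le \min\{d_\infty(A,B),\, d_\infty(D_0,B)\}$, where $D_0$ is the empty diagram.
   Context: A persistence diagram is a finite multiset of points $a=(a_x,a_y)\in\mathbb{R}^2$ with $0\le a_x<a_y<\infty$, together with the diagonal $\Delta=\{(x,x)\}$ taken with infinite multiplicity. The empty diagram $D_0$ consists only of $\Delta$. The bottleneck distance is $d_\infty(A,B)=\inf_\gamma\sup_{a}\|a-\gamma(a)\|_\infty$, the infimum over multi-bijections $\gamma$ between $A\cup\Delta$ and $B\cup\Delta$ (points may be matched to the diagonal; matching a point $a$ to $\Delta$ costs $(a_y-a_x)/2$). For $c>0$, the dilation is $cA=\{(ca_x,ca_y): a\in A\}$ (diagonal fixed), and by convention $0A=D_0$. The dilation-invariant bottleneck dissimilarity is $\overline{d_D}(A,B)=\inf_{c> 0} d_\infty(cA,B)$ (equivalently the infimum over $c\ge 0$). An optimal dilation is a number $c^*\ge 0$ with $d_\infty(c^*A,B)=\overline{d_D}(A,B)$; such a $c^*$ exists. *)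

From mathcomp Require Import all_boot all_order all_algebra.
From mathcomp Require Import classical_sets reals.
Set Implicit Arguments. Unset Strict Implicit. Unset Printing Implicit Defensive.
Import Order.TTheory GRing.Theory Num.Theory.
Local Open Scope ring_scope.
Local Open Scope classical_set_scope.

Section PD.
Variable R : realType.

(* A persistence diagram: finite multiset (list up to permutation) of
   off-diagonal points a = (a_x, a_y) with 0 <= a_x < a_y; the diagonal is implicit. *)
Definition is_diagram (A : seq (R * R)) : bool :=
  all (fun a => (0 <= a.1) && (a.1 < a.2)) A.

Definition linf (a b : R * R) : R := Num.max `|a.1 - b.1| `|a.2 - b.2|.

Definition diag_cost (a : R * R) : R := (a.2 - a.1) / 2.

(* A multi-bijection between A u Diag and B u Diag is determined (up to
   diagonal-diagonal pairs of cost 0) by a partial injection f from the points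
   of A to the points of B; points of A with f i = None and points of B not in
   the image of f are matched to the diagonal. *)
Definition is_matching (m n : nat) (f : 'I_m -> option 'I_n) : Prop :=
  forall i i' j, f i = Some j -> f i' = Some j -> i = i'.

Definition match_cost (A B : seq (R * R))
  (f : 'I_(size A) -> option 'I_(size B)) : R :=
  Num.max
    (\big[Num.max/0]_(i < size A)
        match f i with
        | Some j => linf (nth (0, 0) A i) (nth (0, 0) B j)
        | None => diag_cost (nth (0, 0) A i)
        end)
    (\big[Num.max/0]_(j < size B | [forall i, f i != Some j])
        diag_cost (nth (0, 0) B j)).

Definition bottleneck (A B : seq (R * R)) : R :=
  inf [set r | exists f : 'I_(size A) -> option 'I_(size B),
                 is_matching f /\ r = match_cost f].

Definition D0 : seq (R * R) := [::].

Definition dilate (c : R) (A : seq (R * R)) : seq (R * R) :=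
  if c == 0 then D0 else map (fun a => (c * a.1, c * a.2)) A.

Definition dbar (A B : seq (R * R)) : R :=
  inf [set r | exists c : R, 0 < c /\ r = bottleneck (dilate c A) B].

Definition optimal_dilation (A B : seq (R * R)) (c : R) : Prop :=
  0 <= c /\ bottleneck (dilate c A) B = dbar A B.

End PD.

From mathcomp Require Import all_boot all_order all_algebra.
From mathcomp Require Import classical_sets boolp reals.
Import Order.TTheory GRing.Theory Num.Theory.
Set Implicit Arguments. Unset Strict Implicit. Unset Printing Implicit Defensive.
Local Open Scope classical_set_scope.
Local Open Scope ring_scope.

(* The proof rests on four facts about the bottleneck distance d itself:
   - it is attained by some matching (there are finitely many) and symmetric,
     since an optimal matching can be transposed;
   - it is positively homogeneous, d(kA, kB) = k d(A, B) for k > 0, because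
     scaling a matching scales each of its costs;
   - between diagrams, d(A, B) = 0 iff B is a permutation of A: a matching of
     cost 0 cannot send a point strictly above the diagonal to the diagonal;
   - d(A, B) <= max(h A, h B) and d(D0, B) = h B, where h is the largest
     cost of sending a point to the diagonal.
   Then positivity follows from the zero characterisation at the optimal
   dilation, asymmetry and dilation invariance from homogeneity and symmetry,
   and boundedness from taking c = 1, resp. c -> 0, in the infimum. *)

Section BottleneckTheory.
Variable R : realType.
Implicit Types (A B : seq (R * R)) (c k : R).

Lemma le_max_l (x y : R) : x <= Num.max x y. Proof. by rewrite le_max lexx. Qed.
Lemma le_max_r (x y : R) : y <= Num.max x y. Proof. by rewrite le_max lexx orbT. Qed.

Lemma match_cost_ge0 A B (f : 'I_(size A) -> option 'I_(size B)) :
  0 <= match_cost f.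
Proof. by rewrite /match_cost le_max bigmax_ge_id. Qed.

Lemma diagonal_matching m n : is_matching (fun _ : 'I_m => (None : option 'I_n)).
Proof. by []. Qed.

Lemma bottleneck_le A B (f : 'I_(size A) -> option 'I_(size B)) :
  is_matching f -> bottleneck A B <= match_cost f.
Proof.
move=> hf; apply: ge_inf; last by exists f.
by exists 0 => r [g [_ ->]]; exact: match_cost_ge0.
Qed.

Lemma bottleneck_ge0 A B : 0 <= bottleneck A B.
Proof.
apply: lb_le_inf => [|r [g [_ ->]]]; last exact: match_cost_ge0.
by exists (match_cost (fun _ : 'I_(size A) => (None : option 'I_(size B)))), (fun _ => None).
Qed.

(* There are finitely many matchings, so the infimum is a minimum; we encode
   matchings as finite functions to apply [arg_minP]. *)
Lemma bottleneck_attained A B :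
  exists2 f : 'I_(size A) -> option 'I_(size B),
    is_matching f & bottleneck A B = match_cost f.
Proof.
pose matchingb (g : {ffun 'I_(size A) -> option 'I_(size B)}) :=
  [forall i, forall i', forall j, (g i == Some j) && (g i' == Some j) ==> (i == i')].
have matchingbP (g : {ffun 'I_(size A) -> option 'I_(size B)}) :
    reflect (is_matching g) (matchingb g).
  apply: (iffP forallP) => [h i i' j e1 e2 | h i].
    by move: (h i) => /forallP/(_ i')/forallP/(_ j); rewrite e1 e2 !eqxx => /eqP.
  apply/forallP => i'; apply/forallP => j; apply/implyP => /andP [/eqP e1 /eqP e2].
  by rewrite (h _ _ _ e1 e2).
have diag_b : matchingb [ffun=> None] by apply/matchingbP => i i' j; rewrite ffunE.
have [g /matchingbP gm gmin] := arg_minP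
  (fun g : {ffun 'I_(size A) -> option 'I_(size B)} => match_cost g) diag_b.
exists g => //; apply/le_anti; rewrite bottleneck_le //=.
apply: lb_le_inf; first by exists (match_cost g), g.
move=> r [f [hf ->]].
have ffE : [ffun i => f i] =1 f by move=> i; rewrite ffunE.
have := gmin [ffun i => f i]; rewrite (funext ffE); apply.
by apply/matchingbP => i i' j; rewrite !ffE; exact: hf.
Qed.

Lemma linfC (a b : R * R) : linf a b = linf b a.
Proof. by rewrite /linf distrC [`|a.2 - _|]distrC. Qed.

(* Transposing an optimal matching of (A, B) gives a matching of (B, A) of
   no larger cost. *)
Lemma bottleneck_sym_le A B : bottleneck B A <= bottleneck A B.
Proof.
have [f hf ->] := bottleneck_attained A B.
pose g (j : 'I_(size B)) := [pick i | f i == Some j].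
have gP j i : (g j == Some i) = (f i == Some j).
  rewrite /g; case: pickP => [i' /eqP fi'|none]; last by rewrite none.
  by apply/eqP/eqP => [[<-] //|fi]; congr Some; exact: hf fi' fi.
apply: le_trans (bottleneck_le (f := g) _) _.
  move=> j1 j2 i /eqP; rewrite gP => /eqP e1 /eqP; rewrite gP => /eqP e2.
  by move: e1; rewrite e2 => -[].
rewrite /match_cost ge_max; apply/andP; split; apply: bigmax_le.
- by rewrite le_max bigmax_ge_id.
- move=> j _; case E: (g j) => [i|].
    have fi : f i = Some j by apply/eqP; rewrite -gP E.
    apply: le_trans (le_max_l _ _); rewrite linfC.
    by apply: (bigmax_sup i) => //; rewrite fi.
  apply: le_trans (le_max_r _ _); apply: (bigmax_sup j) => //.
  apply/forallP => i; apply/negP => /eqP fi.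
  by move: E; have := gP j i; rewrite fi eqxx => /eqP ->.
- by rewrite le_max bigmax_ge_id.
- move=> i /forallP hi; apply: le_trans (le_max_l _ _).
  apply: (bigmax_sup i) => //; case E: (f i) => [j|] //.
  by have := hi j; rewrite gP E eqxx.
Qed.

Lemma bottleneck_sym A B : bottleneck A B = bottleneck B A.
Proof. by apply/le_anti; rewrite !bottleneck_sym_le. Qed.


Definition scale_pt c (a : R * R) : R * R := (c * a.1, c * a.2).

Lemma dilateE c A : c != 0 -> dilate c A = map (scale_pt c) A.
Proof. by rewrite /dilate => /negbTE ->. Qed.

Lemma nth_scale c A i :
  nth (0, 0) (map (scale_pt c) A) i = scale_pt c (nth (0, 0) A i).
Proof.
case: (ltnP i (size A)) => hi; first by rewrite (nth_map (0, 0)).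
by rewrite !nth_default ?size_map // /scale_pt /= !mulr0.
Qed.

Lemma linf_scale k a b : 0 <= k -> linf (scale_pt k a) (scale_pt k b) = k * linf a b.
Proof. by move=> hk; rewrite /linf /= -!mulrBr !normrM (ger0_norm hk) -maxr_pMr. Qed.

Lemma diag_cost_scale k a : diag_cost (scale_pt k a) = k * diag_cost a.
Proof. by rewrite /diag_cost /= -mulrBr mulrA. Qed.

(* Scaling both diagrams by k >= 0 transports every matching, multiplying each
   individual cost, hence the bottleneck cost, by k. *)
Lemma bottleneck_scale_le k A B : 0 <= k ->
  bottleneck (map (scale_pt k) A) (map (scale_pt k) B) <= k * bottleneck A B.
Proof.
move=> hk; have [f hf ->] := bottleneck_attained A B.
have eA := size_map (scale_pt k) A; have eB := size_map (scale_pt k) B.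
pose f' i := omap (cast_ord (esym eB)) (f (cast_ord eA i)).
apply: le_trans (bottleneck_le (f := f') _) _.
  move=> i1 i2 j; rewrite /f'.
  case E1: (f _) => [j1|] //= [<-]; case E2: (f _) => [j2|] //= /Some_inj.
  by move/cast_ord_inj => ej; subst j2; exact: cast_ord_inj (hf _ _ _ E1 E2).
rewrite /match_cost maxr_pMr // ge_max; apply/andP; split; apply: bigmax_le;
  rewrite ?le_max ?mulr_ge0 ?bigmax_ge_id //.
- move=> i' _; apply: le_trans (le_max_l _ _); rewrite /f' !nth_scale.
  case E: (f _) => [j|] /=; rewrite ?nth_scale ?linf_scale ?diag_cost_scale //;
    by apply: ler_wpM2l => //; apply: (bigmax_sup (cast_ord eA i')); rewrite ?E.
- move=> j' /forallP hj'; apply: le_trans (le_max_r _ _).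
  rewrite nth_scale diag_cost_scale; apply: ler_wpM2l => //.
  apply: (bigmax_sup (cast_ord eB j')) => //; apply/forallP => i; apply/eqP => E.
  by have := hj' (cast_ord (esym eA) i); rewrite /f' cast_ordKV E /= cast_ordK eqxx.
Qed.

Lemma map_scale_comp a b A :
  map (scale_pt a) (map (scale_pt b) A) = map (scale_pt (a * b)) A.
Proof. by rewrite -map_comp; apply: eq_map => x; rewrite /scale_pt /= !mulrA. Qed.

Lemma map_scale1 A : map (scale_pt 1) A = A.
Proof. by rewrite -[RHS]map_id; apply: eq_map => -[x y]; rewrite /scale_pt /= !mul1r. Qed.

(* For k > 0, scaling back by 1/k gives the reverse inequality, so the
   bottleneck distance is positively homogeneous. *)
Lemma bottleneck_scale k A B : 0 < k ->
  bottleneck (map (scale_pt k) A) (map (scale_pt k) B) = k * bottleneck A B.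
Proof.
move=> hk; apply/le_anti; rewrite bottleneck_scale_le ?(ltW hk) //=.
have := @bottleneck_scale_le k^-1 (map (scale_pt k) A) (map (scale_pt k) B).
rewrite !map_scale_comp mulVf ?gt_eqF // !map_scale1 invr_ge0 ltW // => /(_ isT).
by rewrite ler_pdivlMl.
Qed.

Lemma bottleneck_dilate k A B : 0 < k ->
  bottleneck (dilate k A) (dilate k B) = k * bottleneck A B.
Proof. by move=> hk; rewrite !dilateE ?gt_eqF // bottleneck_scale. Qed.

Lemma dilate_comp a b A : 0 < a -> 0 < b -> dilate a (dilate b A) = dilate (a * b) A.
Proof. by move=> ha hb; rewrite !dilateE ?gt_eqF ?mulr_gt0 // map_scale_comp. Qed.

Lemma dilate1 A : dilate 1 A = A.
Proof. by rewrite dilateE ?oner_eq0 // map_scale1. Qed.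

Lemma diagram_dilate c A : 0 <= c -> is_diagram A -> is_diagram (dilate c A).
Proof.
move=> hc0; have [->|c0] := eqVneq c 0; first by rewrite /dilate eqxx.
have hc : 0 < c by rewrite lt_def c0.
rewrite dilateE // /is_diagram all_map => /allP h; apply/allP => a /h /andP [h1 h2] /=.
by rewrite mulr_ge0 // ltr_pM2l.
Qed.

Lemma diag_cost_gt0 A i : is_diagram A -> (i < size A)%N ->
  0 < diag_cost (nth (0, 0) A i).
Proof.
move=> /(all_nthP (0, 0)) hA /hA /andP [_ h2].
by rewrite /diag_cost divr_gt0 // subr_gt0.
Qed.

Lemma linf_le0 (a b : R * R) : linf a b <= 0 -> a = b.
Proof.
rewrite /linf ge_max !normr_le0 !subr_eq0 => /andP [/eqP h1 /eqP h2].
by case: a b h1 h2 => x y [x' y'] /= -> ->.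
Qed.

Lemma linf_xx (a : R * R) : linf a a = 0.
Proof. by rewrite /linf !subrr normr0 maxxx. Qed.

Lemma map_nth_ord A : [seq nth (0, 0) A (val j) | j <- enum 'I_(size A)] = A.
Proof. by rewrite (map_comp (nth (0, 0) A) val) val_enum_ord -/(mkseq _ _) mkseq_nth. Qed.

Lemma perm_of_exact_matching A B (f : 'I_(size A) -> option 'I_(size B)) :
  is_matching f ->
  (forall i, exists2 j, f i = Some j & nth (0, 0) A i = nth (0, 0) B j) ->
  (forall j, exists i, f i = Some j) -> perm_eq B A.
Proof.
move=> hf htot honto.
pose pt (o : option 'I_(size B)) := if o is Some j then nth (0, 0) B j else (0, 0).
have hp : perm_eq (map f (enum 'I_(size A))) (map Some (enum 'I_(size B))).
  apply: uniq_perm.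
  - rewrite map_inj_in_uniq ?enum_uniq // => i i' _ _ e.
    by have [j e1 _] := htot i; apply: (hf _ _ j e1); rewrite -e.
  - by rewrite map_inj_uniq ?enum_uniq //; move=> x y [].
  - case=> [j|].
      by rewrite [RHS]map_f ?mem_enum //; have [i <-] := honto j; rewrite map_f ?mem_enum.
    apply/mapP/mapP => -[x _ e] //.
    by have [j e1 _] := htot x; rewrite e1 in e.
have eA : map pt (map f (enum 'I_(size A))) = A.
  rewrite -[RHS]map_nth_ord -map_comp; apply: eq_map => i /=.
  by have [j -> ->] := htot i.
have eB : map pt (map Some (enum 'I_(size B))) = B by rewrite -map_comp map_nth_ord.
by have := perm_map pt hp; rewrite eA eB perm_sym.
Qed.

(* Between diagrams, a matching of cost 0 sends no point to the diagonal and
   pairs only equal points. *)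
Lemma cost0_perm A B (f : 'I_(size A) -> option 'I_(size B)) :
  is_diagram A -> is_diagram B -> is_matching f -> match_cost f <= 0 -> perm_eq B A.
Proof.
move=> hA hB hf; rewrite /match_cost ge_max.
move=> /andP [/bigmax_leP [_ hpts] /bigmax_leP [_ hdiag]].
apply: (perm_of_exact_matching hf) => [i|j].
  have := hpts i isT; case: (f i) => [j /linf_le0 e|]; first by exists j.
  by rewrite leNgt diag_cost_gt0.
case: (boolP [forall i, f i != Some j]) => [/hdiag|/forallPn [i /negPn /eqP e]].
  by rewrite leNgt diag_cost_gt0.
by exists i.
Qed.

Lemma perm_cost0 A B : perm_eq B A ->
  exists2 f : 'I_(size A) -> option 'I_(size B), is_matching f & match_cost f <= 0.
Proof.
move=> /(perm_iotaP (0, 0)) [Is hIs eB].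
have sB : size B = size Is by rewrite eB size_map.
have uIs : uniq Is by rewrite (perm_uniq hIs) iota_uniq.
have memIs i : (i \in Is) = (i < size A)%N by rewrite (perm_mem hIs) mem_iota.
pose f (i : 'I_(size A)) := insub (index (val i) Is) : option 'I_(size B).
have fP i j : f i = Some j -> nat_of_ord j = index (nat_of_ord i) Is.
  by rewrite /f; case: insubP => // u _ eu [<-].
have nthB n : (n < size B)%N -> nth (0, 0) B n = nth (0, 0) A (nth 0 Is n).
  by rewrite sB => hn; rewrite eB (nth_map 0).
have fS i : exists j, f i = Some j.
  rewrite /f; case: insubP => [u _ _|]; first by exists u.
  by rewrite sB index_mem memIs ltn_ord.
exists f.
  move=> i i' j /fP e1 /fP e2; apply: val_inj.
  have := congr1 (nth 0 Is) (etrans (esym e1) e2).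
  by rewrite !nth_index ?memIs ?ltn_ord.
rewrite /match_cost ge_max; apply/andP; split; apply: bigmax_le => //.
  move=> i _; have [j E] := fS i; rewrite E.
  by rewrite nthB // (fP _ _ E) nth_index ?memIs // linf_xx.
move=> j /forallP hj.
have jlt : (j < size Is)%N by rewrite -sB.
have ilt : (nth 0 Is j < size A)%N by rewrite -memIs mem_nth.
have := hj (Ordinal ilt); rewrite /f /= index_uniq //.
by rewrite (_ : insub (val j) = Some j) ?eqxx // valK.
Qed.

Lemma bottleneck_eq0 A B : is_diagram A -> is_diagram B ->
  bottleneck A B = 0 <-> perm_eq B A.
Proof.
move=> hA hB; split.
  have [f hf ->] := bottleneck_attained A B.
  by move=> f0; apply: cost0_perm hf _; rewrite // f0.
move=> /perm_cost0 [f hf f0]; apply/le_anti.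
by rewrite bottleneck_ge0 (le_trans (bottleneck_le hf) f0).
Qed.

Definition diag_height A : R := \big[Num.max/0]_(a <- A) diag_cost a.

Lemma diag_height_ord A :
  diag_height A = \big[Num.max/0]_(i < size A) diag_cost (nth (0, 0) A i).
Proof. by rewrite /diag_height (big_nth (0, 0)) big_mkord. Qed.

Lemma diag_height_dilate c A : 0 < c -> diag_height (dilate c A) = c * diag_height A.
Proof.
move=> hc; rewrite dilateE ?gt_eqF // /diag_height big_map.
elim: A => [|a A IH]; first by rewrite !big_nil mulr0.
by rewrite !big_cons IH diag_cost_scale maxr_pMr // ltW.
Qed.

(* Sending every point to the diagonal bounds the bottleneck distance. *)
Lemma bottleneck_le_diag A B :
  bottleneck A B <= Num.max (diag_height A) (diag_height B).
Proof.
apply: le_trans (bottleneck_le (@diagonal_matching (size A) (size B))) _.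
rewrite /match_cost !diag_height_ord le_max2 // (eq_bigl xpredT) // => j.
exact/forallP.
Qed.

Lemma bottleneck_D0 B : bottleneck (D0 R) B = diag_height B.
Proof.
apply/le_anti/andP; split.
  apply: le_trans (bottleneck_le_diag _ _) _.
  by rewrite /diag_height big_nil (max_idPr (bigmax_ge_id _ _ _ _)).
have [f _ ->] := bottleneck_attained (D0 R) B.
rewrite diag_height_ord; apply: le_trans (le_max_r _ _).
by rewrite [leRHS](eq_bigl xpredT) // => j; apply/forallP => -[].
Qed.

Lemma dbar_le A B c : 0 < c -> dbar A B <= bottleneck (dilate c A) B.
Proof.
move=> hc; apply: ge_inf; last by exists c.
by exists 0 => r [c' [_ ->]]; exact: bottleneck_ge0.
Qed.

Lemma dbar_ge0 A B : 0 <= dbar A B.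
Proof.
apply: lb_le_inf; first by exists (bottleneck (dilate 1 A) B), 1.
by move=> r [c' [_ ->]]; exact: bottleneck_ge0.
Qed.

Lemma inf_scale (S : set R) c : 0 < c -> S !=set0 -> (forall x, S x -> 0 <= x) ->
  inf [set c * x | x in S] = c * inf S.
Proof.
move=> hc [x0 Sx0] hS; have hc0 : c != 0 by rewrite gt_eqF.
have hlbS : has_lbound S by exists 0.
apply/le_anti/andP; split; last first.
  by apply: lb_le_inf => [|_ [x Sx <-]]; [exists (c * x0), x0|rewrite ler_pM2l // ge_inf].
rewrite -ler_pdivrMl //; apply: lb_le_inf; first by exists x0.
move=> x Sx; rewrite ler_pdivrMl //; apply: ge_inf; last by exists x.
by exists 0 => _ [y Sy <-]; rewrite mulr_ge0 ?(ltW hc) ?hS.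
Qed.

(* Dilating the first argument only reparametrizes the dilations c' > 0. *)
Lemma dbar_dilatel A B c : 0 < c -> dbar (dilate c A) B = dbar A B.
Proof.
move=> hc; rewrite /dbar; congr inf; apply/seteqP; split => r [c' [hc' ->]].
  by exists (c' * c); split; [rewrite mulr_gt0 | rewrite dilate_comp].
exists (c' / c); split; first by rewrite divr_gt0.
by rewrite dilate_comp ?divr_gt0 // divfK // gt_eqF.
Qed.

(* Dilating the second argument by c multiplies every candidate value by c,
   since d(c'A, cB) = c d((c'/c)A, B). *)
Lemma dbar_dilater A B c : 0 < c -> dbar A (dilate c B) = c * dbar A B.
Proof.
move=> hc; have hc0 : c != 0 by rewrite gt_eqF.
have rescale c' : 0 < c' ->
    bottleneck (dilate c' A) (dilate c B) = c * bottleneck (dilate (c' / c) A) B.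
  by move=> hc'; rewrite -bottleneck_dilate // dilate_comp ?divr_gt0 // mulrC divfK.
rewrite /dbar -inf_scale //; last 2 first.
- by exists (bottleneck (dilate 1 A) B), 1.
- by move=> x [c' [_ ->]]; exact: bottleneck_ge0.
congr inf; apply/seteqP; split => r.
  move=> [c' [hc' ->]]; exists (bottleneck (dilate (c' / c) A) B).
    by exists (c' / c); rewrite divr_gt0.
  by rewrite rescale.
move=> [_ [c' [hc' ->]] <-]; exists (c' * c); split; first by rewrite mulr_gt0.
by rewrite rescale ?mulr_gt0 // mulfK.
Qed.

(* With the optimal dilation c* > 0:
   dbar A B = d(c*A, B) = c* d(A, B/c* ) = c* d(B/c*, A) >= c* dbar B A. *)
Lemma dbar_asym A B cs : optimal_dilation A B cs -> cs * dbar B A <= dbar A B.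
Proof.
move=> [hcs <-]; have [->|cs0] := eqVneq cs 0; first by rewrite mul0r bottleneck_ge0.
have cpos : 0 < cs by rewrite lt_def cs0.
have eB : B = dilate cs (dilate cs^-1 B) by rewrite dilate_comp ?invr_gt0 // mulfV // dilate1.
rewrite [X in bottleneck _ X]eB bottleneck_dilate // bottleneck_sym ler_pM2l //.
by rewrite dbar_le ?invr_gt0.
Qed.

Lemma dbar_eq0 A B cs : is_diagram A -> is_diagram B -> optimal_dilation A B cs ->
  dbar A B = 0 <-> perm_eq B (dilate cs A).
Proof.
by move=> hA hB [hcs <-]; apply: bottleneck_eq0 => //; exact: diagram_dilate.
Qed.

Lemma dbar_le_bottleneck A B : dbar A B <= bottleneck A B.
Proof. by have := dbar_le A B ltr01; rewrite dilate1. Qed.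

(* Shrinking A to nearly nothing: d(cA, B) <= max(c h(A), h(B)) for all c > 0,
   where h is the diagonal height, and h(B) = d(D0, B). *)
Lemma dbar_le_empty A B : dbar A B <= bottleneck (D0 R) B.
Proof.
rewrite bottleneck_D0; apply/ler_addgt0Pr => e he.
set K := diag_height A; have hK : 0 <= K by exact: bigmax_ge_id.
have hK1 : 0 < K + 1 by rewrite ltr_wpDl.
pose c := e / (K + 1); have hc : 0 < c by rewrite divr_gt0.
have cK : c * K <= e by rewrite mulrAC ler_pdivrMr // ler_pM2l // lerDl.
apply: le_trans (dbar_le A B hc) _; apply: le_trans (bottleneck_le_diag _ _) _.
rewrite diag_height_dilate // ge_max lerDl (ltW he) andbT.
by rewrite (le_trans cK) // lerDr bigmax_ge_id.
Qed.

End BottleneckTheory.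

Theorem mainTheorem1 (R : realType) (A B : seq (R * R))
  (hA : is_diagram A) (hB : is_diagram B) (cs : R)
  (hopt : optimal_dilation A B cs) :
  (* (1) positivity *)
  (0 <= dbar A B /\ (dbar A B = 0 <-> perm_eq B (dilate cs A))) /\
  (* (2) asymmetry *)
  (cs * dbar B A <= dbar A B) /\
  (* (3) dilation invariance *)
  (forall c : R, 0 < c ->
     dbar (dilate c A) B = dbar A B /\ dbar A (dilate c B) = c * dbar A B) /\
  (* (4) boundedness *)
  (dbar A B <= Num.min (bottleneck A B) (bottleneck (D0 R) B)).
Proof.
split; first by split; [exact: dbar_ge0 | exact: dbar_eq0].
split; first exact: dbar_asym.
split; first by move=> c hc; rewrite dbar_dilatel // dbar_dilater.
by rewrite le_min dbar_le_bottleneck dbar_le_empty.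
Qed.
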